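(* Let $\mathcal{H}$ be a complex Hilbert space. If $T\in\mathbb{B}(\mathcal{H})$ is normal, then $\Omega(T) = \sqrt{2}\|T\|$.
   Context: $\mathbb{B}(\mathcal{H})$ is the algebra of bounded linear operators on $\mathcal{H}$ and $\|\cdot\|$ the usual operator norm. Dragomir's norm is $\Omega(T)=\sup\{\|\zeta T+\eta T^*\|:\ \zeta,\eta\in\mathbb{C},\ |\zeta|^2+|\eta|^2\le 1\}$. *)

From HB Require Import structures.
From mathcomp Require Import all_boot all_order all_algebra.
From mathcomp Require Import complex.
From mathcomp Require Import boolp classical_sets reals.

Set Implicit Arguments.
Unset Strict Implicit.
Unset Printing Implicit Defensive.
Import Order.TTheory GRing.Theory Num.Theory.
Local Open Scope ring_scope.
Local Open Scope classical_set_scope.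

Section Hilbert.
Variables (R : realType) (V : lmodType R[i]) (inner : V -> V -> R[i]).

Definition is_inner_product : Prop :=
  [/\ (forall (a : R[i]) (x1 x2 y : V),
          inner (a *: x1 + x2) y = a * inner x1 y + inner x2 y),
      (forall x y : V, inner y x = (inner x y)^*),
      (forall x : V, 0 <= inner x x) &
      (forall x : V, inner x x = 0 -> x = 0)].

Definition hnorm (x : V) : R := Num.sqrt (complex.Re (inner x x)).

Definition hcomplete : Prop :=
  forall u : nat -> V,
    (forall e : R, 0 < e -> exists N : nat, forall m n : nat,
        (N <= m)%N -> (N <= n)%N -> hnorm (u m - u n) < e) ->
    exists l : V, forall e : R, 0 < e -> exists N : nat, forall n : nat,
        (N <= n)%N -> hnorm (u n - l) < e.

Definition is_hilbert : Prop := is_inner_product /\ hcomplete.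

Definition bounded_op (T : V -> V) : Prop :=
  (forall (a : R[i]) (x y : V), T (a *: x + y) = a *: T x + T y) /\
  exists M : R, forall x : V, hnorm (T x) <= M * hnorm x.

Definition opnorm (T : V -> V) : R :=
  sup [set hnorm (T x) | x in [set x : V | hnorm x <= 1]].

Definition is_adjoint (T S : V -> V) : Prop :=
  forall x y : V, inner (T x) y = inner x (S y).

Definition normal_op (T Tstar : V -> V) : Prop :=
  forall x : V, T (Tstar x) = Tstar (T x).

Definition Omega (T Tstar : V -> V) : R :=
  sup [set r : R | exists zeta eta : R[i],
          `|zeta| ^+ 2 + `|eta| ^+ 2 <= 1 /\
          r = opnorm (fun x => zeta *: T x + eta *: Tstar x)].
End Hilbert.

From HB Require Import structures.
From mathcomp Require Import all_boot all_order all_algebra.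
From mathcomp Require Import complex.
From mathcomp Require Import boolp classical_sets reals.
From mathcomp Require Import ring lra.

(* Upper bound: for normal T, ||T^* x|| = ||T x||, hence
   ||zeta T x + eta T^* x||^2 <= 2 (|zeta|^2 + |eta|^2) ||T x||^2.
   Lower bound: zeta = eta^* = u / sqrt 2 with |u| = 1 shows that every real
   part Re (u T) = (u T + (u T)^* ) / 2 has norm at most Omega(T) / sqrt 2 =: L.
   It remains to get ||T|| <= L without spectral theory.  Since
   Re (v^2 T^2) = Re (v T)^2 - Re (i v T)^2, the quadratic form of the
   self-adjoint operator Re (v^2 T^2) is a difference of two squared norms,
   each at most L^2 ||x||^2; a self-adjoint operator is bounded by its
   quadratic form, so the real parts of T^2 are bounded by L^2.  Iterating,
   those of T^(2^k) are bounded by L^(2^k), and T^(2^k) = Re (T^(2^k)) +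
   i Re (-i T^(2^k)) has norm at most 2 L^(2^k).  Normality gives
   ||T x||^2 <= ||T^2 x|| ||x||, hence ||T x||^(2^k) <= ||T^(2^k) x|| for unit
   vectors x, and letting k grow yields ||T x|| <= L. *)

Set Implicit Arguments.
Unset Strict Implicit.
Unset Printing Implicit Defensive.
Import Order.TTheory GRing.Theory Num.Theory.
Local Open Scope complex_scope.
Local Open Scope ring_scope.
Local Open Scope classical_set_scope.

Lemma bernoulli_ineq (R : realDomainType) (d : R) n :
  0 <= d -> 1 + n%:R * d <= (1 + d) ^+ n.
Proof.
move=> d0; elim: n => [|n IHn]; first by rewrite mul0r addr0 expr0.
have nd0 : 0 <= n%:R * d by rewrite mulr_ge0.
rewrite exprS -natr1; nra.
Qed.

Lemma exp2n_bounded_le (R : archiRealFieldType) (c a L : R) : 0 <= L ->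
  (forall k, a ^+ (2 ^ k) <= c * L ^+ (2 ^ k)) -> a <= L.
Proof.
move=> L0 bound; rewrite leNgt; apply/negP => La.
have [L_eq0 | L_neq0] := eqVneq L 0.
  by have := bound 0%N; rewrite expn0 !expr1 L_eq0 mulr0; lra.
have Lpos : 0 < L by rewrite lt_def L_neq0 L0.
pose d := a / L - 1.
have d_gt0 : 0 < d by rewrite subr_gt0 ltr_pdivlMr // mul1r.
have cd0 : 0 <= `|c| / d by rewrite divr_ge0 // ltW.
pose k := Num.Def.archi_bound (`|c| / d).
have k_big : `|c| < (2 ^ k)%:R * d.
  rewrite -ltr_pdivrMr //; apply: (lt_le_trans (archi_boundP cd0)).
  by rewrite ler_nat ltnW // ltn_expl.
have := bernoulli_ineq (2 ^ k) (ltW d_gt0).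
have -> : 1 + d = a / L by rewrite /d addrC subrK.
rewrite expr_div_n ler_pdivlMr ?exprn_gt0 //.
have := bound k; have := ler_norm c; have := exprn_gt0 (2 ^ k) Lpos; nra.
Qed.

Section ComplexFacts.
Variable R : rcfType.

Lemma ReJ (z : R[i]) : complex.Re z^* = complex.Re z.
Proof. by case: z. Qed.

Lemma ReMr (z : R[i]) (t : R) : complex.Re (z * t%:C) = complex.Re z * t.
Proof. by case: z => x y /=; rewrite mulr0 subr0. Qed.

Lemma conj_real_complex (t : R) : (t%:C : R[i])^* = t%:C.
Proof. exact: conjc_real. Qed.

Lemma conj_half (z : R[i]) : (z / 2)^* = z^* / 2.
Proof. by rewrite rmorphM rmorphV ?unitfE ?pnatr_eq0 //= rmorph_nat. Qed.

End ComplexFacts.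

Section InnerProduct.
Variables (R : realType) (V : lmodType R[i]) (ip : V -> V -> R[i]).
Hypothesis ip_inner : is_inner_product ip.

Lemma ipDl x y z : ip (x + y) z = ip x z + ip y z.
Proof. by case: ip_inner => lin _ _ _; have := lin 1 x y z; rewrite scale1r mul1r. Qed.

Lemma ip0l y : ip 0 y = 0.
Proof. by apply: (addrI (ip 0 y)); rewrite -ipDl !addr0. Qed.

Lemma ipZl a x z : ip (a *: x) z = a * ip x z.
Proof. by case: ip_inner => lin _ _ _; have := lin a x 0 z; rewrite addr0 ip0l addr0. Qed.

Lemma ipNl x z : ip (- x) z = - ip x z.
Proof. by rewrite -scaleN1r ipZl mulN1r. Qed.

Lemma ipBl x y z : ip (x - y) z = ip x z - ip y z.
Proof. by rewrite ipDl ipNl. Qed.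

Lemma ipC x y : ip y x = (ip x y)^*.
Proof. by case: ip_inner. Qed.

Lemma ipDr x y z : ip z (x + y) = ip z x + ip z y.
Proof. by rewrite ipC ipDl rmorphD /= -!ipC. Qed.

Lemma ipZr a x z : ip z (a *: x) = a^* * ip z x.
Proof. by rewrite ipC ipZl rmorphM /= -ipC. Qed.

Lemma ipNr x z : ip z (- x) = - ip z x.
Proof. by rewrite ipC ipNl rmorphN /= -ipC. Qed.

Lemma ipBr x y z : ip z (x - y) = ip z x - ip z y.
Proof. by rewrite ipDr ipNr. Qed.

Definition sqnorm x := complex.Re (ip x x).

Lemma sqnormE x : sqnorm x = complex.Re (ip x x).
Proof. by []. Qed.

Lemma hnormE x : hnorm ip x = Num.sqrt (sqnorm x).
Proof. by []. Qed.

Lemma ipxx x : ip x x = (sqnorm x)%:C.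
Proof.
case: ip_inner => _ _ ip_ge0 _; have := ip_ge0 x; rewrite /sqnorm.
by case: (ip x x) => a b /andP [/eqP -> _].
Qed.

Lemma sqnorm_ge0 x : 0 <= sqnorm x.
Proof. by rewrite -lecR -ipxx; case: ip_inner. Qed.

Lemma sqnorm_eq0 x : sqnorm x = 0 -> x = 0.
Proof. by case: ip_inner => _ _ _ ip_eq0 sx0; apply: ip_eq0; rewrite ipxx sx0. Qed.

Lemma sqnorm0 : sqnorm 0 = 0.
Proof. by rewrite /sqnorm ip0l. Qed.

Lemma sqnormD x y :
  sqnorm (x + y) = sqnorm x + sqnorm y + 2 * complex.Re (ip x y).
Proof. by rewrite /sqnorm ipDl !ipDr !raddfD /= [ip y x]ipC ReJ; lra. Qed.

Lemma sqnormB x y :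
  sqnorm (x - y) = sqnorm x + sqnorm y - 2 * complex.Re (ip x y).
Proof. by rewrite /sqnorm ipBl !ipBr !raddfB /= [ip y x]ipC ReJ; lra. Qed.

Lemma sqnormZ a x : sqnorm (a *: x) = complex.Re (`|a| ^+ 2) * sqnorm x.
Proof. by rewrite /sqnorm ipZl ipZr mulrA -sqr_normc ipxx ReMr. Qed.

Lemma sqnormZr (t : R) x : sqnorm (t%:C *: x) = t ^+ 2 * sqnorm x.
Proof.
by rewrite /sqnorm ipZl ipZr conj_real_complex mulrA ipxx -rmorphM ReMr.
Qed.

Lemma sqnormD_le x y : sqnorm (x + y) <= 2 * sqnorm x + 2 * sqnorm y.
Proof. by have := sqnorm_ge0 (x - y); rewrite sqnormB sqnormD; lra. Qed.

Lemma Re_ip_sqr_le x y : complex.Re (ip x y) ^+ 2 <= sqnorm x * sqnorm y.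
Proof.
have [x0 | x_neq0] := eqVneq (sqnorm x) 0.
  by rewrite (sqnorm_eq0 x0) ip0l sqnorm0 mul0r expr0n.
have x_gt0 : 0 < sqnorm x by rewrite lt_def x_neq0 sqnorm_ge0.
set c := complex.Re (ip x y).
have := sqnorm_ge0 ((c / sqnorm x)%:C *: x - y).
rewrite sqnormB sqnormZr ipZl [_%:C * _]mulrC ReMr -/c.
have -> : (c / sqnorm x) ^+ 2 * sqnorm x = c ^+ 2 / sqnorm x by field; lra.
have -> : c * (c / sqnorm x) = c ^+ 2 / sqnorm x by rewrite mulrA expr2.
by rewrite -ler_pdivrMl // mulrC; lra.
Qed.

Lemma ip_injl u w : (forall z, ip u z = ip w z) -> u = w.
Proof.
move=> uw; apply/eqP; rewrite -subr_eq0; apply/eqP; apply: sqnorm_eq0.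
by rewrite /sqnorm ipBl uw subrr.
Qed.

End InnerProduct.

Section Operators.
Variables (R : realType) (V : lmodType R[i]) (ip : V -> V -> R[i]).
Hypothesis ip_inner : is_inner_product ip.
Local Notation sqnorm := (sqnorm ip).
Local Notation is_adjoint := (is_adjoint ip).
Local Notation normal_op := (@normal_op R V).

Lemma adjoint_sym S S' : is_adjoint S S' -> is_adjoint S' S.
Proof. by move=> adjS x y; rewrite (ipC ip_inner) -adjS -(ipC ip_inner). Qed.

Lemma adjoint_comp S S' U U' :
  is_adjoint S S' -> is_adjoint U U' -> is_adjoint (S \o U) (U' \o S').
Proof. by move=> adjS adjU x y; rewrite /= adjS adjU. Qed.

Section Adjointable.
Variables S S' : V -> V.
Hypothesis adjS : is_adjoint S S'.

Lemma adjointD : {morph S : x y / x + y}.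
Proof.
by move=> x y; apply: (ip_injl ip_inner) => z; rewrite adjS !(ipDl ip_inner) !adjS.
Qed.

Lemma adjointZ a : {morph S : x / a *: x}.
Proof.
by move=> x; apply: (ip_injl ip_inner) => z; rewrite adjS !(ipZl ip_inner) adjS.
Qed.

Lemma adjointN : {morph S : x / - x}.
Proof. by move=> x; rewrite -scaleN1r adjointZ scaleN1r. Qed.

Lemma adjointB : {morph S : x y / x - y}.
Proof. by move=> x y; rewrite adjointD adjointN. Qed.

Lemma adjoint0 : S 0 = 0.
Proof. by have := adjointZ 0 0; rewrite !scale0r. Qed.

End Adjointable.

Lemma normal_op_sqr S S' : normal_op S S' -> normal_op (S \o S) (S' \o S').
Proof. by move=> nS x; rewrite /= (nS (S' x)) (nS x) (nS (S' (S x))) (nS (S x)). Qed.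

Lemma normal_sqnorm_adjoint S S' : is_adjoint S S' -> normal_op S S' ->
  forall x, sqnorm (S' x) = sqnorm (S x).
Proof.
move=> adjS nS x.
by rewrite !sqnormE (adjoint_sym adjS) nS -adjS (ipC ip_inner) ReJ.
Qed.

Lemma normal_sqnorm_sqr_le S S' : is_adjoint S S' -> normal_op S S' ->
  forall x, sqnorm (S x) ^+ 2 <= sqnorm (S (S x)) * sqnorm x.
Proof.
move=> adjS nS x.
have -> : sqnorm (S x) = complex.Re (ip (S' (S x)) x).
  by rewrite !sqnormE (adjoint_sym adjS).
rewrite -(normal_sqnorm_adjoint adjS nS); exact: Re_ip_sqr_le.
Qed.

End Operators.

Section RealParts.
Variables (R : realType) (V : lmodType R[i]) (ip : V -> V -> R[i]).
Hypothesis ip_inner : is_inner_product ip.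
Local Notation sqnorm := (sqnorm ip).
Local Notation is_adjoint := (is_adjoint ip).
Local Notation normal_op := (@normal_op R V).
Local Notation ipDl := (ipDl ip_inner).
Local Notation ipZl := (ipZl ip_inner).
Local Notation ipBl := (ipBl ip_inner).
Local Notation ipDr := (ipDr ip_inner).
Local Notation ipZr := (ipZr ip_inner).
Local Notation ipBr := (ipBr ip_inner).
Local Notation ipC := (ipC ip_inner).

(* With S' the adjoint of S, [re_op S S' u] is the real part
   (u S + (u S)^* ) / 2 of u S. *)
Definition re_op (S S' : V -> V) (u : R[i]) (y : V) : V :=
  (u / 2) *: S y + (u^* / 2) *: S' y.

Lemma re_op_selfadjoint S S' u :
  is_adjoint S S' -> is_adjoint (re_op S S' u) (re_op S S' u).
Proof.
move=> adjS x y; rewrite /re_op ipDl !ipZl ipDr !ipZr.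
by rewrite adjS (adjoint_sym ip_inner adjS) !conj_half conjCK addrC.
Qed.

Lemma re_op_sqr S S' (v w : R[i]) y : is_adjoint S S' ->
  w * w = - (v * v) -> w * w^* = v * v^* ->
  re_op (S \o S) (S' \o S') (v ^+ 2) y =
  re_op S S' v (re_op S S' v y) - re_op S S' w (re_op S S' w y).
Proof.
move=> adjS ww wcw; have adjS' := adjoint_sym ip_inner adjS.
have cwcw : w^* * w^* = - (v^* * v^*) by rewrite -!rmorphM ww rmorphN.
apply: (ip_injl ip_inner) => z; rewrite /re_op /=.
rewrite !(adjointD ip_inner adjS) !(adjointD ip_inner adjS').
rewrite !(adjointZ ip_inner adjS) !(adjointZ ip_inner adjS').
rewrite !ipBl !ipDl !ipZl rmorphXn /= !ipDl !ipZl.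
have half : 1 - 2 * 2^-1 = 0 :> R[i] by rewrite mulfV ?subrr // pnatr_eq0.
move: (ip (S (S y)) z) (ip (S (S' y)) z) (ip (S' (S y)) z) (ip (S' (S' y)) z).
move=> A B C D; apply/eqP; rewrite -subr_eq0; apply/eqP.
(* LHS - RHS is a combination of quantities that vanish by ww, wcw, cwcw and 2 / 2 = 1 *)
transitivity (2^-1 * (1 - 2 * 2^-1) * (v ^+ 2 * A + v^* ^+ 2 * D)
  + 2^-1 * 2^-1 * ((w * w + v * v) * A - (v * v^* - w * w^*) * (B + C)
                   + (w^* * w^* + v^* * v^*) * D)); first by ring.
by rewrite half ww wcw cwcw addNr subrr addNr; ring.
Qed.

Lemma selfadjoint_polarization X a b : is_adjoint X X ->
  4 * complex.Re (ip (X a) b) =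
  complex.Re (ip (X (a + b)) (a + b)) - complex.Re (ip (X (a - b)) (a - b)).
Proof.
move=> adjX.
have polar : ip (X (a + b)) (a + b) - ip (X (a - b)) (a - b)
          = (ip (X a) b + (ip (X a) b)^*) *+ 2.
  rewrite (adjointD ip_inner adjX) (adjointB ip_inner adjX) !ipBl !ipDl.
  rewrite !ipBr !ipDr [ip (X b) a]adjX [ip b (X a)]ipC.
  ring.
have := congr1 (@complex.Re R) polar.
by rewrite raddfB raddfMn raddfD /= ReJ mulr2n => ->; lra.
Qed.

Lemma selfadjoint_sqnorm_le X (L : R) : is_adjoint X X -> 0 <= L ->
  (forall y, `|complex.Re (ip (X y) y)| <= L * sqnorm y) ->
  forall y, sqnorm (X y) <= L ^+ 2 * sqnorm y.
Proof.
move=> adjX L0 quadX y.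
have bilin a b : 2 * complex.Re (ip (X a) b) <= L * (sqnorm a + sqnorm b).
  have := quadX (a + b); have := quadX (a - b); rewrite !ler_norml.
  have := selfadjoint_polarization a b adjX.
  rewrite (sqnormB ip_inner) (sqnormD ip_inner); lra.
have scaled t : 2 * t * sqnorm (X y) <= L * (sqnorm y + t ^+ 2 * sqnorm (X y)).
  have := bilin y (t%:C *: X y).
  by rewrite ipZr conj_real_complex [_%:C * _]mulrC ReMr -sqnormE
    (sqnormZr ip_inner); lra.
have Xy0 := sqnorm_ge0 ip_inner (X y); have y0 := sqnorm_ge0 ip_inner y.
have [L_eq0 | L_neq0] := eqVneq L 0.
  by have := scaled 1; rewrite L_eq0; nra.
have Lpos : 0 < L by rewrite lt_def L_neq0 L0.
have := scaled L^-1; rewrite -(ler_pM2l Lpos).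
have -> : L * (2 * L^-1 * sqnorm (X y)) = 2 * sqnorm (X y) by field; lra.
have -> : L * (L * (sqnorm y + L^-1 ^+ 2 * sqnorm (X y)))
  = L ^+ 2 * sqnorm y + sqnorm (X y) by field; lra.
lra.
Qed.

Definition real_parts_bounded (S S' : V -> V) (L : R) :=
  forall u : R[i], `|u| = 1 -> forall y, sqnorm (re_op S S' u y) <= L * sqnorm y.

Lemma real_parts_bounded_sqr S S' L : is_adjoint S S' -> 0 <= L ->
  real_parts_bounded S S' L -> real_parts_bounded (S \o S) (S' \o S') (L ^+ 2).
Proof.
move=> adjS L0 boundS u u1 y.
pose v := sqrtc u; pose w := 'i * v.
have v2 : v ^+ 2 = u by exact: sqr_sqrtc.
have v1 : `|v| = 1 by apply/eqP; rewrite -(@pexpr_eq1 _ _ 2) // -normrX v2 u1.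
have w1 : `|w| = 1 by rewrite normrM normCi v1 mulr1.
have ww : w * w = - (v * v) by rewrite mulrACA -expr2 sqrCi mulN1r.
have wcw : w * w^* = v * v^*.
  by rewrite rmorphM /= conjCi mulrACA mulrN -expr2 sqrCi opprK mul1r.
rewrite -v2; apply: selfadjoint_sqnorm_le => //.
  exact/re_op_selfadjoint/adjoint_comp.
move=> z; rewrite (re_op_sqr _ adjS ww wcw) ipBl.
rewrite [ip (re_op _ _ v _) _](re_op_selfadjoint v adjS).
rewrite [ip (re_op _ _ w _) _](re_op_selfadjoint w adjS) raddfB /= -!sqnormE.
have := boundS v v1 z; have := boundS w w1 z.
have := sqnorm_ge0 ip_inner (re_op S S' v z).
have := sqnorm_ge0 ip_inner (re_op S S' w z).
by rewrite ler_norml; lra.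
Qed.

Lemma sqnorm_le_real_parts S S' L : is_adjoint S S' ->
  real_parts_bounded S S' L -> forall y, sqnorm (S y) <= 4 * L * sqnorm y.
Proof.
move=> adjS boundS y.
have decomp : S y = re_op S S' 1 y + 'i *: re_op S S' (- 'i) y.
  have i_half : 'i * ('i / 2) = - (1 / 2) :> R[i].
    by rewrite mulrA -expr2 sqrCi mulNr.
  rewrite /re_op scalerDr !scalerA rmorph1 rmorphN /= conjCi opprK.
  rewrite mulNr mulrN i_half opprK scaleNr addrACA subrr addr0.
  by rewrite -scalerDl -splitr scale1r.
have := sqnormD_le ip_inner (re_op S S' 1 y) ('i *: re_op S S' (- 'i) y).
rewrite -decomp (sqnormZ ip_inner) normCi expr1n mul1r.
have i1 : `|- 'i| = 1 :> R[i] by rewrite normrN normCi.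
have := boundS 1 (normr1 _) y; have := boundS (- 'i) i1 y.
lra.
Qed.

Lemma sqnorm_le_from_unit_ball F F' L : is_adjoint F F' ->
  (forall y, sqnorm y <= 1 -> sqnorm (F y) <= L) ->
  forall y, sqnorm (F y) <= L * sqnorm y.
Proof.
move=> adjF boundF y.
have [y0 | y_neq0] := eqVneq (sqnorm y) 0.
  by rewrite (sqnorm_eq0 ip_inner y0) (adjoint0 ip_inner adjF) (sqnorm0 ip_inner) mulr0.
have y_gt0 : 0 < sqnorm y by rewrite lt_def y_neq0 sqnorm_ge0.
pose s := Num.sqrt (sqnorm y).
have s_gt0 : 0 < s by rewrite sqrtr_gt0.
have s2 : s ^+ 2 = sqnorm y by rewrite sqr_sqrtr // ltW.
have := boundF (s^-1%:C *: y).
rewrite (adjointZ ip_inner adjF) !(sqnormZr ip_inner) exprVn s2 mulVf //.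
by move=> /(_ (lexx 1)) bound; rewrite -ler_pdivrMr // mulrC.
Qed.

Lemma normal_sqnorm_exp2n_le S S' L x k : is_adjoint S S' -> normal_op S S' ->
  0 <= L -> real_parts_bounded S S' L -> sqnorm x <= 1 ->
  sqnorm (S x) ^+ (2 ^ k) <= 4 * L ^+ (2 ^ k).
Proof.
move=> + + + + x1; elim: k S S' L => [|k IHk] S S' L adjS nS L0 boundS.
  have := sqnorm_le_real_parts adjS boundS x; have := sqnorm_ge0 ip_inner x.
  by rewrite expn0 !expr1; nra.
rewrite expnS !exprM.
apply: le_trans (IHk _ _ _ (adjoint_comp adjS adjS) (normal_op_sqr nS)
  (sqr_ge0 L) (real_parts_bounded_sqr adjS L0 boundS)).
apply: lerXn2r; rewrite ?nnegrE ?sqr_ge0 ?sqnorm_ge0 //.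
apply: le_trans (normal_sqnorm_sqr_le ip_inner adjS nS x) _.
have := sqnorm_ge0 ip_inner (S (S x)); have := sqnorm_ge0 ip_inner x; nra.
Qed.

Lemma normal_sqnorm_le_real_parts S S' L x : is_adjoint S S' -> normal_op S S' ->
  0 <= L -> real_parts_bounded S S' L -> sqnorm x <= 1 -> sqnorm (S x) <= L.
Proof.
move=> adjS nS L0 boundS x1; apply: (@exp2n_bounded_le _ 4) => // k.
exact: normal_sqnorm_exp2n_le.
Qed.

End RealParts.

Section OperatorNorm.
Variables (R : realType) (V : lmodType R[i]) (ip : V -> V -> R[i]).
Hypothesis ip_inner : is_inner_product ip.
Local Notation hnorm := (hnorm ip).
Local Notation opnorm := (opnorm ip).

Lemma hnorm_ge0 x : 0 <= hnorm x.
Proof. exact: sqrtr_ge0. Qed.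

Lemma hnorm0 : hnorm 0 = 0.
Proof. by rewrite hnormE (sqnorm0 ip_inner) sqrtr0. Qed.

Lemma hnorm_le x (c : R) : 0 <= c -> (hnorm x <= c) = (sqnorm ip x <= c ^+ 2).
Proof.
move=> c0.
by rewrite hnormE -[c in LHS](ger0_norm c0) -sqrtr_sqr ler_sqrt ?sqr_ge0.
Qed.

Lemma hnorm_le1 x : (hnorm x <= 1) = (sqnorm ip x <= 1).
Proof. by rewrite hnorm_le // expr1n. Qed.

Lemma hnormZr (t : R) x : hnorm (t%:C *: x) = `|t| * hnorm x.
Proof. by rewrite !hnormE (sqnormZr ip_inner) sqrtrM ?sqr_ge0 // sqrtr_sqr. Qed.

Lemma opnorm_le F (c : R) :
  (forall x, hnorm x <= 1 -> hnorm (F x) <= c) -> opnorm F <= c.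
Proof.
move=> boundF; apply: ge_sup; last by move=> _ [x x1 <-]; apply: boundF.
by exists (hnorm (F 0)), 0 => //; rewrite /mkset hnorm0 ler01.
Qed.

Lemma hnorm_le_opnorm F (c : R) x :
  (forall x, hnorm x <= 1 -> hnorm (F x) <= c) ->
  hnorm x <= 1 -> hnorm (F x) <= opnorm F.
Proof.
move=> boundF x1; apply: ub_le_sup; last by exists x.
by exists c => _ [y y1 <-]; apply: boundF.
Qed.

End OperatorNorm.

Section DragomirNorm.
Variables (R : realType) (V : lmodType R[i]) (ip : V -> V -> R[i]).
Variables T Tstar : V -> V.
Hypotheses (ip_inner : is_inner_product ip) (T_bounded : bounded_op ip T).
Hypotheses (T_adj : is_adjoint ip T Tstar) (T_normal : normal_op T Tstar).
Local Notation hnorm := (hnorm ip).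
Local Notation opnorm := (opnorm ip).
Local Notation sqrt2 := (Num.sqrt (2 : R)).

Lemma hnormT_le_opnorm x : hnorm x <= 1 -> hnorm (T x) <= opnorm T.
Proof.
have [M boundT] := T_bounded.2.
apply: (hnorm_le_opnorm (c := `|M|)) => y y1.
have := boundT y; have := hnorm_ge0 ip y; have := ler_norm M.
have := normr_ge0 M; nra.
Qed.

Lemma opnormT_ge0 : 0 <= opnorm T.
Proof.
apply: le_trans (hnorm_ge0 ip (T 0)) (hnormT_le_opnorm _).
by rewrite (hnorm0 ip_inner) ler01.
Qed.

Lemma hnorm_combination_le (zeta eta : R[i]) x :
  `|zeta| ^+ 2 + `|eta| ^+ 2 <= 1 -> hnorm x <= 1 ->
  hnorm (zeta *: T x + eta *: Tstar x) <= sqrt2 * opnorm T.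
Proof.
move=> norms1 x1.
have norms1' : complex.Re (`|zeta| ^+ 2) + complex.Re (`|eta| ^+ 2) <= 1.
  by rewrite -raddfD; move: norms1; rewrite lecE => /andP [].
have zeta0 : 0 <= complex.Re (`|zeta| ^+ 2).
  by have := exprn_ge0 2 (normr_ge0 zeta); rewrite lecE => /andP [].
have eta0 : 0 <= complex.Re (`|eta| ^+ 2).
  by have := exprn_ge0 2 (normr_ge0 eta); rewrite lecE => /andP [].
have Tx := hnormT_le_opnorm x1; rewrite hnorm_le ?opnormT_ge0 // in Tx.
rewrite hnorm_le ?mulr_ge0 ?sqrtr_ge0 ?opnormT_ge0 // exprMn sqr_sqrtr ?ler0n //.
apply: le_trans (sqnormD_le ip_inner _ _) _.
rewrite !(sqnormZ ip_inner) (normal_sqnorm_adjoint ip_inner T_adj T_normal).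
have := sqnorm_ge0 ip_inner (T x); nra.
Qed.

Lemma Omega_le_sqrt2_opnorm : Omega ip T Tstar <= sqrt2 * opnorm T.
Proof.
apply: ge_sup.
  exists (opnorm (fun x => 0 *: T x + 0 *: Tstar x)), 0, 0.
  by rewrite normr0 expr0n addr0 ler01.
move=> _ [zeta [eta [norms1 ->]]]; apply: (opnorm_le ip_inner) => x x1.
exact: hnorm_combination_le.
Qed.

Lemma opnorm_combination_le_Omega (zeta eta : R[i]) :
  `|zeta| ^+ 2 + `|eta| ^+ 2 <= 1 ->
  opnorm (fun x => zeta *: T x + eta *: Tstar x) <= Omega ip T Tstar.
Proof.
move=> norms1; apply: ub_le_sup; last by exists zeta, eta.
exists (sqrt2 * opnorm T) => _ [zeta' [eta' [norms1' ->]]].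
by apply: (opnorm_le ip_inner) => x x1; apply: hnorm_combination_le.
Qed.

(* zeta = eta^* = u / sqrt 2 turns zeta T + eta T^* into sqrt 2 times the
   real part of u T. *)
Lemma hnorm_re_op_le_Omega (u : R[i]) x : `|u| = 1 -> hnorm x <= 1 ->
  hnorm (re_op T Tstar u x) <= Omega ip T Tstar / sqrt2.
Proof.
move=> u1 x1; have sqrt2_gt0 : 0 < sqrt2 by rewrite sqrtr_gt0.
pose c : R := sqrt2 / 2.
have c_half : c ^+ 2 + c ^+ 2 = 1.
  by rewrite /c expr_div_n sqr_sqrtr ?ler0n //; field.
have cC : c%:C = sqrt2%:C / 2.
  by rewrite rmorphM rmorphV ?unitfE ?pnatr_eq0 //= rmorph_nat.
have normc : `|c%:C| = c%:C.
  by rewrite ger0_norm // ler0c divr_ge0 ?sqrtr_ge0 ?ler0n.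
rewrite ler_pdivlMr // mulrC -[sqrt2](ger0_norm (ltW sqrt2_gt0)).
rewrite -(hnormZr ip_inner).
have -> : sqrt2%:C *: re_op T Tstar u x
          = (c%:C * u) *: T x + (c%:C * u^*) *: Tstar x.
  by rewrite /re_op scalerDr !scalerA cC !mulrA !(mulrAC _ _ 2^-1) mulrC.
have norms1 : `|c%:C * u| ^+ 2 + `|c%:C * u^*| ^+ 2 <= 1.
  by rewrite !normrM normcJ u1 mulr1 normc -rmorphXn -rmorphD c_half.
apply: le_trans (opnorm_combination_le_Omega norms1).
by apply: (hnorm_le_opnorm (c := sqrt2 * opnorm T)) x1 => y y1;
  apply: hnorm_combination_le.
Qed.

Lemma sqrt2_opnorm_le_Omega : sqrt2 * opnorm T <= Omega ip T Tstar.
Proof.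
have sqrt2_gt0 : 0 < sqrt2 by rewrite sqrtr_gt0.
pose c := Omega ip T Tstar / sqrt2.
have c0 : 0 <= c.
  apply: le_trans (hnorm_ge0 ip _) (hnorm_re_op_le_Omega (x := 0) (normr1 _) _).
  by rewrite (hnorm0 ip_inner) ler01.
have re_bound : real_parts_bounded ip T Tstar (c ^+ 2).
  move=> u u1.
  apply: (sqnorm_le_from_unit_ball ip_inner (re_op_selfadjoint ip_inner u T_adj)).
  by move=> y y1; rewrite -hnorm_le // hnorm_re_op_le_Omega // hnorm_le1.
rewrite mulrC -ler_pdivlMr //; apply: (opnorm_le ip_inner) => x x1.
rewrite hnorm_le //; apply: (normal_sqnorm_le_real_parts ip_inner T_adj T_normal).
- exact: sqr_ge0.
- exact: re_bound.
- by rewrite -hnorm_le1.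
Qed.

End DragomirNorm.

Theorem corollary3p5 (R : realType) (V : lmodType R[i])
  (inner : V -> V -> R[i]) (T Tstar : V -> V) :
  is_hilbert inner ->
  bounded_op inner T ->
  is_adjoint inner T Tstar ->
  normal_op T Tstar ->
  Omega inner T Tstar = Num.sqrt 2 * opnorm inner T.
Proof.
move=> [inner_ip _] T_bounded T_adj T_normal; apply: le_anti; apply/andP; split.
- exact: Omega_le_sqrt2_opnorm.
- exact: sqrt2_opnorm_le_Omega.
Qed.
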